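(* Let $\mathcal{A}$ and $\mathcal{B}$ be unital Banach algebras, $T\in\mathcal{L}^1(\mathcal{A},\mathcal{B})$ and $\Psi\in\mathcal{L}^2(\mathcal{B},\mathcal{B})$. Then $$\|\delta_T^2\,T^{\vee}\|\leq \mathrm{adef}(\Psi)\cdot\|T\|^3.$$
   Context: $\mathcal{L}^n(\mathcal{A},\mathcal{B})$ denotes the space of bounded $n$-linear maps $\mathcal{A}^n\to\mathcal{B}$ with the operator norm. $T^{\vee}\in\mathcal{L}^2(\mathcal{A},\mathcal{B})$ is defined by $T^{\vee}(x,y)=T(xy)-\Psi(T(x),T(y))$. The operator $\delta_T^2:\mathcal{L}^2(\mathcal{A},\mathcal{B})\to\mathcal{L}^3(\mathcal{A},\mathcal{B})$ is defined by $\delta_T^2\phi(x,y,z)=\Psi(T(x),\phi(y,z))-\phi(xy,z)+\phi(x,yz)-\Psi(\phi(x,y),T(z))$. The associative defect is $\mathrm{adef}(\Psi)=\sup\{\|\Psi(u,\Psi(v,w))-\Psi(\Psi(u,v),w)\|: u,v,w\in\mathcal{B},\ \|u\|,\|v\|,\|w\|\leq1\}$. *)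

From HB Require Import structures.
From mathcomp Require Import all_boot all_order all_algebra.
From mathcomp Require Import all_classical all_reals.
From mathcomp Require Import topology normedtype.
Set Implicit Arguments. Unset Strict Implicit. Unset Printing Implicit Defensive.
Import Order.TTheory GRing.Theory Num.Theory.
Import numFieldNormedType.Exports.
Local Open Scope classical_set_scope.
Local Open Scope ring_scope.

Section Defs.
Context {R : realType}.

Definition unital_banach_algebra (A : completeNormedModType R)
    (mul : A -> A -> A) (one : A) : Prop :=
  [/\ associative mul, left_id one mul & right_id one mul] /\
  [/\ (forall (a : R) (x y z : A), mul (a *: x + y) z = a *: mul x z + mul y z),
      (forall (a : R) (x y z : A), mul z (a *: x + y) = a *: mul z x + mul z y),
      (forall x y : A, `|mul x y| <= `|x| * `|y|)
    & `|one| = 1].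

Variables (A B : normedModType R).

Definition lin1 (f : A -> B) : Prop :=
  forall (a : R) (x y : A), f (a *: x + y) = a *: f x + f y.

Definition lin2 (f : A -> A -> B) : Prop :=
  (forall y, lin1 (fun x => f x y)) /\ (forall x, lin1 (fun y => f x y)).

Definition lin3 (f : A -> A -> A -> B) : Prop :=
  [/\ forall y z, lin1 (fun x => f x y z),
      forall x z, lin1 (fun y => f x y z)
    & forall x y, lin1 (fun z => f x y z)].

Definition bounded1 (f : A -> B) : Prop :=
  lin1 f /\ exists M : R, forall x, `|f x| <= M * `|x|.

Definition bounded2 (f : A -> A -> B) : Prop :=
  lin2 f /\ exists M : R, forall x y, `|f x y| <= M * `|x| * `|y|.

Definition opnorm1 (f : A -> B) : R :=
  sup [set r | exists x, `|x| <= 1 /\ r = `|f x|].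

Definition opnorm2 (f : A -> A -> B) : R :=
  sup [set r | exists x y, [/\ `|x| <= 1, `|y| <= 1 & r = `|f x y|]].

Definition opnorm3 (f : A -> A -> A -> B) : R :=
  sup [set r | exists x y z,
        [/\ `|x| <= 1, `|y| <= 1, `|z| <= 1 & r = `|f x y z|]].

Definition Tvee (mulA : A -> A -> A) (T : A -> B) (Psi : B -> B -> B)
  : A -> A -> B := fun x y => T (mulA x y) - Psi (T x) (T y).

Definition delta2 (mulA : A -> A -> A) (T : A -> B) (Psi : B -> B -> B)
  (phi : A -> A -> B) : A -> A -> A -> B :=
  fun x y z => Psi (T x) (phi y z) - phi (mulA x y) z + phi x (mulA y z)
               - Psi (phi x y) (T z).

End Defs.

Definition adef {R : realType} {B : normedModType R} (Psi : B -> B -> B) : R :=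
  sup [set r | exists u v w : B,
        [/\ `|u| <= 1, `|v| <= 1, `|w| <= 1 &
            r = `|Psi u (Psi v w) - Psi (Psi u v) w|]].

From HB Require Import structures.
From mathcomp Require Import all_boot all_order all_algebra.
From mathcomp Require Import all_classical all_reals.
From mathcomp Require Import topology normedtype.
Import Order.TTheory GRing.Theory Num.Theory.
Import numFieldNormedType.Exports.
Local Open Scope ring_scope.

(* Associativity of the product of A makes delta_T^2 T^vee collapse to minus
   the associator of Psi evaluated at (T x, T y, T z); the associator is
   trilinear, so its norm is at most adef(Psi) |T x| |T y| |T z|. *)

Section Linear.
Context {R : realType} {A B : normedModType R} {f : A -> B}.
Hypothesis linf : lin1 f.

Lemma lin1_0 : f 0 = 0.
Proof.
have := linf 1 0 0; rewrite !scale1r addr0 => f0D.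
by apply: (@addrI _ (f 0)); rewrite addr0 -f0D.
Qed.

Lemma lin1Z a x : f (a *: x) = a *: f x.
Proof. by rewrite -[a *: x]addr0 linf lin1_0 addr0. Qed.

Lemma lin1B x y : f (x - y) = f x - f y.
Proof. by rewrite addrC -scaleN1r linf scaleN1r addrC. Qed.

End Linear.

Section Normalize.
Context {R : numFieldType} {B : normedModType R}.

(* [normalize 0 = 0], as [0^-1 = 0]. *)
Definition normalize (x : B) : B := `|x|^-1 *: x.

Lemma scale_normalize x : `|x| *: normalize x = x.
Proof.
have [->|x0] := eqVneq x 0; first by rewrite /normalize !scaler0.
by rewrite scalerA divff ?scale1r ?normr_eq0.
Qed.

Lemma norm_normalize_le1 x : `|normalize x| <= 1.
Proof.
have [->|x0] := eqVneq x 0; first by rewrite /normalize scaler0 normr0.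
by rewrite normrZ normfV normr_id mulVf ?normr_eq0.
Qed.

End Normalize.

Lemma bounded2_nonneg {R : realType} {A B : normedModType R} {f : A -> A -> B} :
  bounded2 f -> exists2 M : R, 0 <= M & forall x y, `|f x y| <= M * `|x| * `|y|.
Proof.
case=> _ [M leM]; exists `|M| => // x y.
by rewrite (le_trans (leM x y)) // !ler_wpM2r ?ler_norm.
Qed.

Section AssociativeDefect.
Context {R : realType} {B : normedModType R} (Psi : B -> B -> B).

Definition associator u v w : B := Psi u (Psi v w) - Psi (Psi u v) w.

Section Bilinear.
Hypothesis linPsi : lin2 Psi.

Lemma associatorZ a b c u v w :
  associator (a *: u) (b *: v) (c *: w) = (a * b * c) *: associator u v w.
Proof.
case: linPsi => linl linr.
rewrite /associator !(lin1Z (linl _), lin1Z (linr _)) !scalerA.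
by rewrite (mulrC c) [a * c * b]mulrAC scalerBr.
Qed.

End Bilinear.

Hypothesis bPsi : bounded2 Psi.

Lemma norm_associator_le_adef u v w : `|u| <= 1 -> `|v| <= 1 -> `|w| <= 1 ->
  `|associator u v w| <= adef Psi.
Proof.
move=> u1 v1 w1; apply: ub_le_sup; last by exists u, v, w.
have [M M0 leM] := bounded2_nonneg bPsi.
have le_unitl x y : `|x| <= 1 -> `|Psi x y| <= M * `|y|.
  move=> x1; rewrite (le_trans (leM x y)) // ler_wpM2r //.
  by rewrite ler_piMr.
have le_unitr x y : `|y| <= 1 -> `|Psi x y| <= M * `|x|.
  by move=> y1; rewrite (le_trans (leM x y)) // ler_piMr ?mulr_ge0.
exists (M * M + M * M) => _ [x [y [z [x1 y1 z1 ->]]]].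
rewrite (le_trans (ler_normB _ _)) // lerD //.
- rewrite (le_trans (le_unitl _ _ x1)) // ler_wpM2l //.
  by rewrite (le_trans (le_unitl _ _ y1)) // ler_piMr.
- rewrite (le_trans (le_unitr _ _ z1)) // ler_wpM2l //.
  by rewrite (le_trans (le_unitl _ _ x1)) // ler_piMr.
Qed.

Lemma adef_ge0 : 0 <= adef Psi.
Proof.
have := @norm_associator_le_adef 0 0 0; rewrite normr0 ler01 => /(_ isT isT isT).
exact: le_trans.
Qed.

Lemma norm_associator_le u v w :
  `|associator u v w| <= adef Psi * (`|u| * `|v| * `|w|).
Proof.
have [linPsi _] := bPsi.
rewrite -{1}[u]scale_normalize -{1}[v]scale_normalize -{1}[w]scale_normalize.
rewrite associatorZ // normrZ ger0_norm ?mulr_ge0 // mulrC ler_wpM2r ?mulr_ge0 //.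
by rewrite norm_associator_le_adef ?norm_normalize_le1.
Qed.

End AssociativeDefect.

Section Coboundary.
Context {R : realType} {A B : normedModType R} (mulA : A -> A -> A) (T : A -> B)
  (Psi : B -> B -> B).
Hypotheses (mulA_assoc : associative mulA) (linPsi : lin2 Psi).

Lemma delta2_Tvee x y z :
  delta2 mulA T Psi (Tvee mulA T Psi) x y z = - associator Psi (T x) (T y) (T z).
Proof.
have [linl linr] := linPsi.
rewrite /delta2 /Tvee /associator (lin1B (linr _)) (lin1B (linl _)) mulA_assoc.
set p := Psi (T x) _; set r := Psi (T (mulA x y)) _.
(* T((xy)z), p and r each occur once with each sign. *)
rewrite !opprB !addrA subrK addrAC [p - _ + r - p]addrAC addrK [p - _ - p]addrAC.
by rewrite subrr add0r addrC.
Qed.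

End Coboundary.

Lemma norm_le_opnorm1 {R : realType} {A B : normedModType R} (f : A -> B) x :
  bounded1 f -> `|x| <= 1 -> `|f x| <= opnorm1 f.
Proof.
case=> _ [M leM] x1; apply: ub_le_sup; last by exists x.
exists `|M| => _ [y [y1 ->]].
rewrite (le_trans (leM y)) // (le_trans (ler_wpM2r _ (ler_norm M))) //.
by rewrite ler_piMr.
Qed.

Theorem lemma2p1 (R : realType) (A B : completeNormedModType R)
    (mulA : A -> A -> A) (oneA : A) (mulB : B -> B -> B) (oneB : B)
    (hA : unital_banach_algebra mulA oneA)
    (hB : unital_banach_algebra mulB oneB)
    (T : A -> B) (Psi : B -> B -> B)
    (hT : bounded1 T) (hPsi : bounded2 Psi) :
  opnorm3 (delta2 mulA T Psi (Tvee mulA T Psi)) <= adef Psi * opnorm1 T ^+ 3.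
Proof.
have [[mulA_assoc _ _] _] := hA.
have [linPsi _] := hPsi.
apply: ge_sup.
  by exists `|delta2 mulA T Psi (Tvee mulA T Psi) 0 0 0|, 0, 0, 0; rewrite normr0 ler01.
move=> _ [x [y [z [x1 y1 z1 ->]]]].
rewrite delta2_Tvee // normrN (le_trans (norm_associator_le _ hPsi _ _ _)) //.
rewrite ler_wpM2l ?(adef_ge0 _ hPsi) // exprS expr2 mulrA.
by rewrite !ler_pM ?mulr_ge0 ?norm_le_opnorm1.
Qed.
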